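(* Let $A>0$, $B>0$ and $0<v_{\mathrm{nozzle}}<1$. There exist $w>0$, $t_{\mathrm{end}}>0$ and $v\in C^1([0,t_{\mathrm{end}}])$ solving $$v'(t)=-v(t)^2\Big(\sqrt{A^2t^2+w}+v(t)\Big),\quad v(0)=1,\quad v(t_{\mathrm{end}})=v_{\mathrm{nozzle}},\quad \int_0^{t_{\mathrm{end}}}\frac{At\,v(t)}{\sqrt{A^2t^2+w}}\,dt=B$$ (equivalently, a curved-jet solution of the dimensionless model: $v(s),\Theta(s)$ on $[0,s_{\mathrm{end}}]$ with $(v+v'/v)'=-A\sin\Theta/v$, $\Theta'=-A\cos\Theta/(v(v+v'/v))$, $v(0)=1$, $v(s_{\mathrm{end}})=v_{\mathrm{nozzle}}$, $\Theta(0)=0$, $\int_0^{s_{\mathrm{end}}}\sin\Theta\,ds=B$, with $v+v'/v<0$, obtained via $ds=v\,dt$, $\sin\Theta=At/\sqrt{A^2t^2+w}$) if and only if $$I(0;A,v_{\mathrm{nozzle}})>B.$$ If such a solution exists, it is unique.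
   Context: For $A>0$ and $w\ge0$, $v(\cdot;w):[0,\infty)\to(0,1]$ denotes the unique solution of $v'=-v^2(\sqrt{A^2t^2+w}+v)$, $v(0)=1$; it is strictly decreasing in $t$ and tends to $0$ as $t\to\infty$. For $0<v_{\mathrm{nozzle}}<1$, $t_{\mathrm{end}}(w)>0$ is the unique time with $v(t_{\mathrm{end}}(w);w)=v_{\mathrm{nozzle}}$, and $$I(w)=I(w;A,v_{\mathrm{nozzle}})=\int_0^{t_{\mathrm{end}}(w)}\frac{At\,v(t;w)}{\sqrt{A^2t^2+w}}\,dt.$$ In particular $I(0;A,v_{\mathrm{nozzle}})=\int_0^{t_{\mathrm{end}}(0)}v(t;0)\,dt$. Here $A=g\mu/v_{\mathrm{belt}}^3$, $B=v_{\mathrm{belt}}L/\mu$, and $v_{\mathrm{nozzle}}$ is the ratio of nozzle velocity to belt velocity. *)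

From Stdlib Require Import Reals Lra ClassicalEpsilon.
From Coquelicot Require Import Coquelicot.
Open Scope R_scope.

Definition jet_rhs (A w t x : R) : R := - x ^ 2 * (sqrt (A ^ 2 * t ^ 2 + w) + x).

(* Since the right-hand side is continuous,
   this is exactly v in C^1([0,T]) solving the ODE (one-sided derivatives
   at the endpoints). *)
Definition ode_sol (A w T : R) (v : R -> R) : Prop :=
  (forall t, 0 < t < T -> is_derive v t (jet_rhs A w t (v t))) /\
  filterlim v (at_right 0) (locally (v 0)) /\
  filterlim v (at_left T) (locally (v T)).

Definition ode_sol_global (A w : R) (v : R -> R) : Prop :=
  (forall t, 0 < t -> is_derive v t (jet_rhs A w t (v t))) /\
  filterlim v (at_right 0) (locally (v 0)).

Definition vsol (A w : R) : R -> R :=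
  epsilon (inhabits (fun _ : R => 0))
    (fun v => ode_sol_global A w v /\ v 0 = 1).

Definition t_end (A w vn : R) : R :=
  epsilon (inhabits 0) (fun T => 0 < T /\ vsol A w T = vn).

Definition I_fun (A w vn : R) : R :=
  RInt (fun t => A * t * vsol A w t / sqrt (A ^ 2 * t ^ 2 + w)) 0 (t_end A w vn).

Definition I0 (A vn : R) : R := RInt (vsol A 0) 0 (t_end A 0 vn).

Definition bvp_sol (A B vn w T : R) (v : R -> R) : Prop :=
  0 < w /\ 0 < T /\ ode_sol A w T v /\ v 0 = 1 /\ v T = vn /\
  RInt (fun t => A * t * v t / sqrt (A ^ 2 * t ^ 2 + w)) 0 T = B.

From Stdlib Require Import Reals Lra Lia ClassicalEpsilon.
From Coquelicot Require Import Coquelicot.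
Open Scope R_scope.

(* With [U = 1 / v] the jet equation becomes [U' = sqrt (A^2 t^2 + w) + 1 / U], [U 0 = 1],
   whose right-hand side is globally Lipschitz on [U >= 1]; Picard iteration yields a
   global solution, and a Gronwall estimate on [(v - 1/U)^2] shows it is the only one.
   [U] increases strictly in [t] and in [w], so [t_end w] is well defined and the
   integral [I w] is continuous and strictly decreasing in [s = sqrt w], with [I 0] the
   value of the statement and [I w <= t_end w <= 2 (1/v_nozzle - 1) / sqrt w].  A solution
   of the boundary value problem is exactly a [w > 0] with [I w = B], so the intermediate
   value theorem gives existence iff [I 0 > B], and strict monotonicity gives uniqueness. *)

Lemma continuity_pt_lipschitz (f : R -> R) x L :
  0 <= L -> (forall y, Rabs (f y - f x) <= L * Rabs (y - x)) -> continuity_pt f x.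
Proof.
  intros HL Hf eps Heps. exists (eps / (L + 1)). split.
  - apply Rdiv_lt_0_compat; lra.
  - intros y [_ Hy]. simpl in *. unfold R_dist in *.
    apply Rle_lt_trans with (L * (eps / (L + 1))).
    + eapply Rle_trans; [apply Hf|]. apply Rmult_le_compat_l; lra.
    + apply Rlt_le_trans with ((L + 1) * (eps / (L + 1))).
      * apply Rmult_lt_compat_r; [apply Rdiv_lt_0_compat|]; lra.
      * right; field; lra.
Qed.

Lemma exp_le_compat x y : x <= y -> exp x <= exp y.
Proof. intros [Hlt|Heq]; [left; now apply exp_increasing | subst; lra]. Qed.

Lemma ex_RInt_continuity_pt (f : R -> R) a b :
  (forall x, continuity_pt f x) -> ex_RInt f a b.
Proof.
  intro Hf. apply (ex_RInt_continuous (V := R_CompleteNormedModule)).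
  intros x _. now apply continuity_pt_filterlim.
Qed.

Lemma is_derive_RInt_0 (f : R -> R) x :
  (forall y, continuity_pt f y) -> is_derive (fun y => RInt f 0 y) x (f x).
Proof.
  intro Hf. apply (is_derive_RInt _ _ 0).
  - apply filter_forall. intro b.
    apply (RInt_correct (V := R_CompleteNormedModule)), ex_RInt_continuity_pt, Hf.
  - now apply continuity_pt_filterlim.
Qed.

Lemma is_derive_continuity_pt (f : R -> R) x l : is_derive f x l -> continuity_pt f x.
Proof.
  intro Hf. apply continuity_pt_filterlim.
  apply (ex_derive_continuous (K := R_AbsRing) (V := R_NormedModule)). now exists l.
Qed.

Lemma continuity_pt_RInt_0 (f : R -> R) x :
  (forall y, continuity_pt f y) -> continuity_pt (fun y => RInt f 0 y) x.
Proof. intro Hf. eapply is_derive_continuity_pt, is_derive_RInt_0, Hf. Qed.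

Lemma is_derive_mult_exp (f h : R -> R) x df dh :
  is_derive f x df -> is_derive h x dh ->
  is_derive (fun y => f y * exp (h y)) x ((df + dh * f x) * exp (h x)).
Proof.
  intros Hf Hh.
  replace ((df + dh * f x) * exp (h x)) with (df * exp (h x) + f x * (dh * exp (h x))) by ring.
  apply (is_derive_mult f (fun y => exp (h y))); auto.
  - apply (is_derive_comp exp h); auto. apply is_derive_Reals, derivable_pt_lim_exp.
  - intros; apply Rmult_comm.
Qed.

Lemma derive_nonpos_le (f df : R -> R) a b : a <= b ->
  (forall x, a < x < b -> is_derive f x (df x)) ->
  (forall x, a <= x <= b -> continuity_pt f x) ->
  (forall x, a <= x <= b -> df x <= 0) -> f b <= f a.
Proof.
  intros Hab Hd Hc Hs.
  destruct (MVT_gen f a b df) as [c [Hc1 Hc2]];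
    rewrite ?Rmin_left, ?Rmax_right in * by lra; auto.
  specialize (Hs c Hc1). nra.
Qed.

Lemma derive_pos_lt (f df : R -> R) a b : a < b ->
  (forall x, a < x < b -> is_derive f x (df x)) ->
  (forall x, a <= x <= b -> continuity_pt f x) ->
  (forall x, a <= x <= b -> 0 < df x) -> f a < f b.
Proof.
  intros Hab Hd Hc Hs.
  destruct (MVT_gen f a b df) as [c [Hc1 Hc2]];
    rewrite ?Rmin_left, ?Rmax_right in * by lra; auto.
  specialize (Hs c Hc1). nra.
Qed.

Lemma derive_le_increment_le (f g df dg : R -> R) a b : a <= b ->
  (forall x, a < x < b -> is_derive f x (df x)) ->
  (forall x, a < x < b -> is_derive g x (dg x)) ->
  (forall x, a <= x <= b -> continuity_pt f x) ->
  (forall x, a <= x <= b -> continuity_pt g x) ->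
  (forall x, a <= x <= b -> df x <= dg x) -> f b - f a <= g b - g a.
Proof.
  intros Hab Hf Hg Hcf Hcg Hle.
  enough (f b - g b <= f a - g a) by lra.
  apply (derive_nonpos_le (fun t => f t - g t) (fun t => df t - dg t)); auto.
  - intros x Hx. apply (is_derive_minus f g); auto.
  - intros x Hx. apply continuity_pt_minus; auto.
  - intros x Hx. specialize (Hle x Hx). lra.
Qed.

Lemma gronwall (f df : R -> R) L T : 0 <= T ->
  (forall x, 0 < x < T -> is_derive f x (df x)) ->
  (forall x, 0 <= x <= T -> continuity_pt f x) ->
  (forall x, 0 <= x <= T -> df x <= L * f x) ->
  f T <= f 0 * exp (L * T).
Proof.
  intros HT Hd Hc Hle.
  assert (Hg : f T * exp (- L * T) <= f 0 * exp (- L * 0)).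
  { apply (derive_nonpos_le (fun x => f x * exp (- L * x))
             (fun x => (df x + - L * f x) * exp (- L * x))); auto.
    - intros x Hx. apply is_derive_mult_exp; auto.
      auto_derive; auto. ring.
    - intros x Hx. apply continuity_pt_mult; [auto | reg].
    - intros x Hx. specialize (Hle x Hx). pose proof (exp_pos (- L * x)). nra. }
  rewrite Rmult_0_r, exp_0, Rmult_1_r in Hg.
  replace (f T) with (f T * exp (- L * T) * exp (L * T)).
  - pose proof (exp_pos (L * T)). nra.
  - rewrite Rmult_assoc, <- exp_plus. replace (- L * T + L * T) with 0 by ring.
    rewrite exp_0. ring.
Qed.

Lemma abs_RInt_le_const_swap (f : R -> R) a b M :
  ex_RInt f a b -> (forall x, Rmin a b <= x <= Rmax a b -> Rabs (f x) <= M) ->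
  Rabs (RInt f a b) <= Rabs (b - a) * M.
Proof.
  intros Hf HM. destruct (Rle_dec a b).
  - rewrite Rmin_left, Rmax_right in HM by lra. rewrite (Rabs_pos_eq (b - a)) by lra.
    now apply abs_RInt_le_const.
  - rewrite Rmin_right, Rmax_left in HM by lra.
    rewrite <- (opp_RInt_swap (V := R_CompleteNormedModule))
      by now apply (ex_RInt_swap (V := R_CompleteNormedModule)).
    change (Rabs (- RInt f b a) <= Rabs (b - a) * M).
    rewrite Rabs_Ropp, Rabs_minus_sym, (Rabs_pos_eq (a - b)) by lra.
    apply abs_RInt_le_const; auto; [lra|].
    now apply (ex_RInt_swap (V := R_CompleteNormedModule)).
Qed.

Lemma continuity_pt_bounded (f : R -> R) a b : a <= b ->
  (forall x, continuity_pt f x) -> exists M, forall x, a <= x <= b -> Rabs (f x) <= M.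
Proof.
  intros Hab Hf.
  destruct (continuity_ab_maj (fun x => Rabs (f x)) a b Hab) as [c [Hc _]].
  - intros x _. apply (continuity_pt_comp f Rabs); [apply Hf | apply Rcontinuity_abs].
  - now exists (Rabs (f c)).
Qed.

Definition clamp (a b t : R) : R := Rmax a (Rmin b t).

Lemma clamp_id a b t : a <= t <= b -> clamp a b t = t.
Proof. intro. unfold clamp, Rmax, Rmin. repeat destruct Rle_dec; lra. Qed.

Lemma clamp_le a b t : a <= b -> t <= a -> clamp a b t = a.
Proof. intros. unfold clamp, Rmax, Rmin. repeat destruct Rle_dec; lra. Qed.

Lemma clamp_ge a b t : a <= b -> b <= t -> clamp a b t = b.
Proof. intros. unfold clamp, Rmax, Rmin. repeat destruct Rle_dec; lra. Qed.

Lemma at_right_delta (f : R -> R) a l eps : filterlim f (at_right a) (locally l) -> 0 < eps ->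
  exists d, 0 < d /\ forall y, a < y < a + d -> Rabs (f y - l) < eps.
Proof.
  intros H He.
  destruct (proj1 (filterlim_locally f l) H (mkposreal eps He)) as [d Hd].
  exists d. split; [apply cond_pos|]. intros y Hy. apply (Hd y); [|lra].
  change (Rabs (y - a) < d). rewrite Rabs_pos_eq; lra.
Qed.

Lemma at_left_delta (f : R -> R) b l eps : filterlim f (at_left b) (locally l) -> 0 < eps ->
  exists d, 0 < d /\ forall y, b - d < y < b -> Rabs (f y - l) < eps.
Proof.
  intros H He.
  destruct (proj1 (filterlim_locally f l) H (mkposreal eps He)) as [d Hd].
  exists d. split; [apply cond_pos|]. intros y Hy. apply (Hd y); [|lra].
  change (Rabs (y - b) < d). rewrite Rabs_left; lra.
Qed.

Lemma continuity_pt_at_right (f : R -> R) x :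
  continuity_pt f x -> filterlim f (at_right x) (locally (f x)).
Proof.
  intros Hf P HP. destruct (proj1 (continuity_pt_filterlim _ _) Hf P HP) as [d Hd].
  exists d. intros y Hy _. now apply Hd.
Qed.

Lemma continuity_pt_at_left (f : R -> R) x :
  continuity_pt f x -> filterlim f (at_left x) (locally (f x)).
Proof.
  intros Hf P HP. destruct (proj1 (continuity_pt_filterlim _ _) Hf P HP) as [d Hd].
  exists d. intros y Hy _. now apply Hd.
Qed.

(* Extending [f] by constants outside [a, b] makes it continuous on all of R, so the
   two-sided MVT lemmas above apply to functions given only on the closed segment. *)
Lemma continuity_pt_clamp (f : R -> R) a b x : a < b ->
  (forall y, a < y < b -> continuity_pt f y) ->
  filterlim f (at_right a) (locally (f a)) ->
  filterlim f (at_left b) (locally (f b)) ->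
  continuity_pt (fun t => f (clamp a b t)) x.
Proof.
  intros Hab Hi Hr Hl eps He.
  destruct (at_right_delta f a (f a) eps Hr He) as [da [Hda Ha]].
  destruct (at_left_delta f b (f b) eps Hl He) as [db [Hdb Hb]].
  destruct (Rlt_le_dec a x) as [Hax|Hxa]; [destruct (Rlt_le_dec x b) as [Hxb|Hbx]|].
  - destruct (Hi x (conj Hax Hxb) eps He) as [d [Hd Hx]].
    exists (Rmin d (Rmin (x - a) (b - x))).
    split; [repeat apply Rmin_pos; lra|].
    intros y [Hne Hy]. simpl in *. unfold R_dist in *.
    pose proof (Rmin_l d (Rmin (x - a) (b - x))). pose proof (Rmin_r d (Rmin (x - a) (b - x))).
    pose proof (Rmin_l (x - a) (b - x)). pose proof (Rmin_r (x - a) (b - x)).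
    apply Rabs_lt_between in Hy as Hy'.
    rewrite !clamp_id by lra. apply Hx. split; [exact Hne | simpl; unfold R_dist; lra].
  - exists (Rmin db (b - a)). split; [apply Rmin_pos; lra|].
    intros y [_ Hy]. simpl in *. unfold R_dist in *.
    pose proof (Rmin_l db (b - a)). pose proof (Rmin_r db (b - a)).
    apply Rabs_lt_between in Hy.
    rewrite (clamp_ge a b x) by lra.
    destruct (Rle_lt_dec b y); [rewrite clamp_ge by lra; rewrite Rminus_diag, Rabs_R0; lra|].
    rewrite clamp_id by lra. apply Hb. lra.
  - exists (Rmin da (b - a)). split; [apply Rmin_pos; lra|].
    intros y [_ Hy]. simpl in *. unfold R_dist in *.
    pose proof (Rmin_l da (b - a)). pose proof (Rmin_r da (b - a)).
    apply Rabs_lt_between in Hy.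
    rewrite (clamp_le a b x) by lra.
    destruct (Rle_lt_dec y a); [rewrite clamp_le by lra; rewrite Rminus_diag, Rabs_R0; lra|].
    rewrite clamp_id by lra. apply Ha. lra.
Qed.

Lemma half_pow_small C eps : 0 < eps -> exists N, forall n, (N <= n)%nat -> C * (/ 2) ^ n < eps.
Proof.
  intro He. destruct (Rle_lt_dec C 0) as [HC|HC].
  { exists 0%nat. intros n _. pose proof (pow_lt (/ 2) n ltac:(lra)). nra. }
  destruct (pow_lt_1_zero (/ 2) ltac:(rewrite Rabs_pos_eq; lra) (eps / C)) as [N HN].
  { now apply Rdiv_lt_0_compat. }
  exists N. intros n Hn. specialize (HN n Hn).
  rewrite Rabs_pos_eq in HN by (left; apply pow_lt; lra).
  apply Rmult_lt_compat_l with (r := C) in HN; auto.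
  now replace (C * (eps / C)) with eps in HN by (field; lra).
Qed.

Lemma geometric_bound_eq0 D C : (forall n, Rabs D <= C * (/ 2) ^ n) -> D = 0.
Proof.
  intro H. destruct (Req_dec D 0) as [|HD]; auto. exfalso.
  destruct (half_pow_small C (Rabs D) (Rabs_pos_lt D HD)) as [N HN].
  specialize (HN N (le_n N)). specialize (H N). lra.
Qed.

Lemma RInt_minus_R (f g : R -> R) a b : ex_RInt f a b -> ex_RInt g a b ->
  RInt (fun u => f u - g u) a b = RInt f a b - RInt g a b.
Proof. intros. now apply (RInt_minus (V := R_CompleteNormedModule)). Qed.

Lemma RInt_exp_2 c x : RInt (fun u => c * exp (2 * u)) 0 x = c * (exp (2 * x) - 1) / 2.
Proof.
  assert (H : is_RInt (fun u => c * exp (2 * u)) 0 x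
                (minus (c * exp (2 * x) / 2) (c * exp (2 * 0) / 2))).
  { apply (is_RInt_derive (fun u => c * exp (2 * u) / 2)).
    - intros. auto_derive; auto. field.
    - intros. apply continuity_pt_filterlim. reg. }
  rewrite (is_RInt_unique _ _ _ _ H). unfold minus, plus, opp. simpl.
  rewrite Rmult_0_r, exp_0. field.
Qed.

(** * The Picard solution of the [U] equation *)

(* The paper's [sqrt (A^2 t^2 + w)] with [w = s^2]: parametrizing by [s = sqrt w]
   makes every quantity below defined and continuous in [s] on all of R. *)
Definition rad (A s t : R) : R := sqrt (A ^ 2 * t ^ 2 + s ^ 2).

Lemma rad_arg_nonneg A s t : 0 <= A ^ 2 * t ^ 2 + s ^ 2.
Proof.
  pose proof (pow2_ge_0 s). pose proof (pow2_ge_0 (A * t)). rewrite Rpow_mult_distr in *. lra.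
Qed.

Lemma rad_ge A s t : Rabs (A * t) <= rad A s t /\ Rabs s <= rad A s t.
Proof.
  unfold rad. replace (A ^ 2 * t ^ 2) with ((A * t) ^ 2) by ring.
  destruct (sqrt_plus_sqr (A * t) s) as [H _].
  pose proof (Rmax_l (Rabs (A * t)) (Rabs s)). pose proof (Rmax_r (Rabs (A * t)) (Rabs s)).
  lra.
Qed.

Lemma rad_le A s t : rad A s t <= Rabs (A * t) + Rabs s.
Proof.
  unfold rad. rewrite <- (sqrt_pow2 (Rabs (A * t) + Rabs s))
    by (pose proof (Rabs_pos (A * t)); pose proof (Rabs_pos s); lra).
  apply sqrt_le_1_alt.
  replace (A ^ 2 * t ^ 2) with (Rabs (A * t) ^ 2) by (rewrite pow2_abs; ring).
  rewrite <- (pow2_abs s). pose proof (Rabs_pos (A * t)). pose proof (Rabs_pos s). nra.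
Qed.

Lemma rad_le_compat A s s' t t' : s ^ 2 <= s' ^ 2 -> t ^ 2 <= t' ^ 2 -> rad A s t <= rad A s' t'.
Proof.
  intros Hs Ht. apply sqrt_le_1_alt.
  assert (A ^ 2 * t ^ 2 <= A ^ 2 * t' ^ 2) by (apply Rmult_le_compat_l; [apply pow2_ge_0|lra]).
  lra.
Qed.

Lemma rad_lt_compat A s s' t : s ^ 2 < s' ^ 2 -> rad A s t < rad A s' t.
Proof.
  intro Hs. apply sqrt_lt_1_alt. split; [apply rad_arg_nonneg | lra].
Qed.

Lemma rad_pos A s t : s <> 0 -> 0 < rad A s t.
Proof. intro Hs. pose proof (proj2 (rad_ge A s t)). pose proof (Rabs_pos_lt s Hs). lra. Qed.

Lemma continuity_pt_rad A s t : continuity_pt (rad A s) t.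
Proof.
  apply (continuity_pt_comp (fun t => A ^ 2 * t ^ 2 + s ^ 2) sqrt); [reg|].
  apply continuity_pt_sqrt, rad_arg_nonneg.
Qed.

Lemma rad_lipschitz A s s' t : Rabs (rad A s t - rad A s' t) <= Rabs (s - s').
Proof.
  eapply Rle_trans; [|apply Rabs_triang_inv2].
  destruct (rad_ge A s t) as [_ Hs]. destruct (rad_ge A s' t) as [_ Hs'].
  set (P := rad A s t) in *. set (Q := rad A s' t) in *.
  assert (E : (P - Q) * (P + Q) = (Rabs s - Rabs s') * (Rabs s + Rabs s')).
  { assert (EP : P * P = A ^ 2 * t ^ 2 + s ^ 2) by apply sqrt_sqrt, rad_arg_nonneg.
    assert (EQ : Q * Q = A ^ 2 * t ^ 2 + s' ^ 2) by apply sqrt_sqrt, rad_arg_nonneg.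
    rewrite <- (pow2_abs s) in EP. rewrite <- (pow2_abs s') in EQ. nra. }
  pose proof (Rabs_pos s). pose proof (Rabs_pos s').
  destruct (Req_dec (P + Q) 0) as [HPQ|HPQ].
  - replace (P - Q) with 0 by lra. rewrite Rabs_R0. apply Rabs_pos.
  - apply Rmult_le_reg_r with (P + Q); [lra|].
    rewrite <- (Rabs_pos_eq (P + Q)) at 1 by lra. rewrite <- Rabs_mult, E, Rabs_mult.
    rewrite (Rabs_pos_eq (Rabs s + Rabs s')) by lra.
    apply Rmult_le_compat_l; [apply Rabs_pos | lra].
Qed.

(* A globally 1-Lipschitz replacement of [/ x], exact on [x >= 1] where [U = 1 / v] lives. *)
Definition clip (x : R) : R := / Rmax 1 x.

Lemma clip_bounds x : 0 < clip x <= 1.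
Proof.
  unfold clip. pose proof (Rmax_l 1 x). split; [apply Rinv_0_lt_compat; lra|].
  replace 1 with (/ 1) at 2 by apply Rinv_1. apply Rinv_le_contravar; lra.
Qed.

Lemma clip_inv x : 1 <= x -> clip x = / x.
Proof. intro. unfold clip. now rewrite Rmax_right. Qed.

Lemma clip_lipschitz x y : Rabs (clip x - clip y) <= Rabs (x - y).
Proof.
  unfold clip. pose proof (Rmax_l 1 x). pose proof (Rmax_l 1 y).
  assert (Hm : Rabs (Rmax 1 y - Rmax 1 x) <= Rabs (x - y)).
  { unfold Rmax; destruct (Rle_dec 1 x), (Rle_dec 1 y); split_Rabs; lra. }
  set (a := Rmax 1 x) in *. set (b := Rmax 1 y) in *.
  replace (/ a - / b) with ((b - a) / (a * b)) by (field; lra).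
  rewrite Rabs_div by nra. rewrite (Rabs_pos_eq (a * b)) by nra.
  apply Rle_trans with (Rabs (b - a)); [|lra].
  apply Rmult_le_reg_r with (a * b); [nra|].
  unfold Rdiv. rewrite Rmult_assoc, Rinv_l by nra.
  assert (1 <= a * b) by nra. pose proof (Rabs_pos (b - a)). nra.
Qed.

Lemma continuity_pt_clip x : continuity_pt clip x.
Proof.
  apply (continuity_pt_lipschitz _ _ 1); [lra|]. intro y. rewrite Rmult_1_l. apply clip_lipschitz.
Qed.

Section Picard.

Variables A s : R.

(* The Picard map of [U' = rad + 1 / U], [U 0 = 1], where [U = 1 / v]; it is
   extended evenly to [t < 0] so that all iterates are continuous on R. *)
Definition picard_map (g : R -> R) (t : R) : R :=
  1 + RInt (fun u => rad A s u + clip (g u)) 0 (Rabs t).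

Fixpoint picard (n : nat) : R -> R :=
  match n with
  | O => fun _ => 1
  | S m => picard_map (picard m)
  end.

Definition picard_bound (t : R) : R := 2 * (Rabs A + Rabs s + 1) * exp (2 * Rabs t).

Lemma continuity_pt_picard_map (g : R -> R) t :
  (forall x, continuity_pt g x) -> continuity_pt (picard_map g) t.
Proof.
  intro Hg. apply continuity_pt_plus; [apply continuity_pt_const; now intros ? ?|].
  apply (continuity_pt_comp Rabs (fun y => RInt _ 0 y)); [apply Rcontinuity_abs|].
  apply continuity_pt_RInt_0. intro u. apply continuity_pt_plus; [apply continuity_pt_rad|].
  apply (continuity_pt_comp g clip); [apply Hg | apply continuity_pt_clip].
Qed.

Lemma continuity_pt_picard n t : continuity_pt (picard n) t.
Proof.
  revert t. induction n as [|n IH]; intro t.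
  - apply continuity_pt_const. now intros ? ?.
  - now apply continuity_pt_picard_map.
Qed.

Lemma picard_map_sub (g h : R -> R) t :
  (forall x, continuity_pt g x) -> (forall x, continuity_pt h x) ->
  picard_map g t - picard_map h t = RInt (fun u => clip (g u) - clip (h u)) 0 (Rabs t).
Proof.
  intros Hg Hh. unfold picard_map.
  match goal with |- 1 + ?X - (1 + ?Y) = _ => transitivity (X - Y); [lra|] end.
  rewrite <- RInt_minus_R; [apply RInt_ext; intros; cbn; ring| |];
    apply ex_RInt_continuity_pt; intro u;
    apply continuity_pt_plus, (continuity_pt_comp _ clip);
    auto using continuity_pt_rad, continuity_pt_clip.
Qed.

Lemma picard_bound_pos t : 0 < picard_bound t.
Proof.
  unfold picard_bound. pose proof (Rabs_pos A). pose proof (Rabs_pos s).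
  pose proof (exp_pos (2 * Rabs t)). nra.
Qed.

Lemma picard_bound_le z t : Rabs z <= Rabs t -> picard_bound z <= picard_bound t.
Proof.
  intro Hz. unfold picard_bound. apply Rmult_le_compat_l; [|apply exp_le_compat; lra].
  pose proof (Rabs_pos A). pose proof (Rabs_pos s). lra.
Qed.

Lemma picard_step_0 t : Rabs (picard 1 t - picard 0 t) <= picard_bound t * / 2.
Proof.
  replace (picard 1 t - picard 0 t) with (RInt (fun u => rad A s u + clip 1) 0 (Rabs t))
    by (simpl; unfold picard_map; lra).
  set (x := Rabs t). assert (Hx : 0 <= x) by apply Rabs_pos.
  eapply Rle_trans.
  { apply (abs_RInt_le_const _ _ _ (Rabs A * x + Rabs s + 1)); [exact Hx| |].
    - apply ex_RInt_continuity_pt. intro u.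
      apply continuity_pt_plus; [apply continuity_pt_rad | apply continuity_pt_const; now intros ? ?].
    - intros u Hu. assert (0 <= rad A s u) by apply sqrt_pos.
      pose proof (rad_le A s u) as Hr. rewrite Rabs_mult, (Rabs_pos_eq u) in Hr by lra.
      pose proof (clip_bounds 1). pose proof (Rabs_pos A). rewrite Rabs_pos_eq by lra.
      assert (Rabs A * u <= Rabs A * x) by (apply Rmult_le_compat_l; lra). lra. }
  unfold picard_bound. fold x.
  replace (exp (2 * x)) with (exp x * exp x) by (rewrite <- exp_plus; f_equal; ring).
  pose proof (exp_ineq1_le x). pose proof (Rabs_pos A). pose proof (Rabs_pos s).
  assert (Hxx : x * x <= exp x * exp x) by nra.
  assert (Hx1 : x <= exp x * exp x) by nra.
  assert (Rabs A * (x * x) <= Rabs A * (exp x * exp x)) by (apply Rmult_le_compat_l; lra).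
  assert ((Rabs s + 1) * x <= (Rabs s + 1) * (exp x * exp x)) by (apply Rmult_le_compat_l; lra).
  nra.
Qed.

(* The weight [exp (2 |t|)] in [picard_bound] is what makes each iteration gain a
   factor [1/2] uniformly on bounded sets, despite the unbounded time interval. *)
Lemma picard_step n t :
  Rabs (picard (S n) t - picard n t) <= picard_bound t * (/ 2) ^ S n.
Proof.
  revert t. induction n as [|n IH]; intro t.
  - rewrite pow_1. apply picard_step_0.
  - change (picard (S (S n)) t - picard (S n) t) with
      (picard_map (picard (S n)) t - picard_map (picard n) t).
    rewrite picard_map_sub by apply continuity_pt_picard.
    set (x := Rabs t). assert (Hx : 0 <= x) by apply Rabs_pos.
    set (c := 2 * (Rabs A + Rabs s + 1) * (/ 2) ^ S n).
    assert (Hclip : forall u, continuity_pt (fun u => clip (picard (S n) u) - clip (picard n u)) u).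
    { intro u. apply continuity_pt_minus;
        apply (continuity_pt_comp _ clip); auto using continuity_pt_picard, continuity_pt_clip. }
    eapply Rle_trans; [apply abs_RInt_le; [exact Hx | apply ex_RInt_continuity_pt, Hclip]|].
    eapply Rle_trans; [apply (RInt_le _ (fun u => c * exp (2 * u))); [exact Hx| | |]|].
    + apply ex_RInt_continuity_pt. intro u.
      apply (continuity_pt_comp _ Rabs); [apply Hclip | apply Rcontinuity_abs].
    + apply ex_RInt_continuity_pt. intro u. reg.
    + intros u Hu. eapply Rle_trans; [apply clip_lipschitz|]. eapply Rle_trans; [apply IH|].
      unfold picard_bound, c. rewrite (Rabs_pos_eq u) by lra. right; ring.
    + rewrite RInt_exp_2. unfold picard_bound, c. fold x. simpl.
      pose proof (picard_bound_pos t). pose proof (pow_lt (/ 2) n ltac:(lra)).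
      assert (0 < (Rabs A + Rabs s + 1) * (/ 2) ^ n)
        by (apply Rmult_lt_0_compat; [pose proof (Rabs_pos A); pose proof (Rabs_pos s)|]; lra).
      pose proof (exp_pos (2 * x)). nra.
Qed.

Lemma picard_cauchy n m t : (n <= m)%nat ->
  Rabs (picard m t - picard n t) <= picard_bound t * (/ 2) ^ n.
Proof.
  intro Hnm. replace m with (n + (m - n))%nat by lia. pose proof (picard_bound_pos t).
  enough (Hk : forall k, Rabs (picard (n + k) t - picard n t) <=
                        picard_bound t * (/ 2) ^ n * (1 - (/ 2) ^ k)).
  { specialize (Hk (m - n)%nat). pose proof (pow_lt (/ 2) (m - n) ltac:(lra)).
    assert (0 < picard_bound t * (/ 2) ^ n) by (apply Rmult_lt_0_compat; [|apply pow_lt]; lra).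
    nra. }
  induction k as [|k IH].
  - rewrite Nat.add_0_r, Rminus_diag, Rabs_R0. simpl. lra.
  - rewrite Nat.add_succ_r.
    replace (picard (S (n + k)) t - picard n t) with
      ((picard (S (n + k)) t - picard (n + k) t) + (picard (n + k) t - picard n t)) by ring.
    eapply Rle_trans; [apply Rabs_triang|].
    pose proof (picard_step (n + k) t) as Hs. rewrite <- plus_Sn_m, pow_add in Hs.
    simpl in *. nra.
Qed.

Definition jet_U (t : R) : R := real (Lim_seq (fun n => picard n t)).

Lemma picard_cvg t : is_lim_seq (fun n => picard n t) (jet_U t).
Proof.
  assert (Hex : ex_finite_lim_seq (fun n => picard n t)).
  { apply ex_lim_seq_cauchy_corr. intro eps.
    destruct (half_pow_small (picard_bound t) eps (cond_pos eps)) as [N HN].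
    exists N. intros n m Hn Hm. destruct (Nat.le_ge_cases n m).
    - rewrite Rabs_minus_sym. eapply Rle_lt_trans; [apply picard_cauchy|]; auto.
    - eapply Rle_lt_trans; [apply picard_cauchy|]; auto. }
  destruct Hex as [l Hl]. unfold jet_U. now rewrite (is_lim_seq_unique _ _ Hl).
Qed.

Lemma jet_U_picard n t : Rabs (jet_U t - picard n t) <= picard_bound t * (/ 2) ^ n.
Proof.
  apply (is_lim_seq_le (fun m => Rabs (picard (m + n) t - picard n t))
           (fun _ => picard_bound t * (/ 2) ^ n) (Rabs (jet_U t - picard n t))
           (picard_bound t * (/ 2) ^ n)).
  - intro m. apply picard_cauchy. lia.
  - apply (is_lim_seq_abs _ (Finite _)), is_lim_seq_minus'; [|apply is_lim_seq_const].
    apply (is_lim_seq_incr_n (fun m => picard m t)), picard_cvg.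
  - apply is_lim_seq_const.
Qed.

Lemma continuity_pt_jet_U t : continuity_pt jet_U t.
Proof.
  intros eps Heps.
  destruct (half_pow_small (picard_bound (Rabs t + 1)) (eps / 3) ltac:(lra)) as [N HN].
  specialize (HN N (le_n N)).
  assert (Happrox : forall z, Rabs z <= Rabs t + 1 -> Rabs (jet_U z - picard N z) < eps / 3).
  { intros z Hz. eapply Rle_lt_trans; [apply jet_U_picard|]. eapply Rle_lt_trans; [|exact HN].
    apply Rmult_le_compat_r; [left; apply pow_lt; lra|]. apply picard_bound_le.
    rewrite (Rabs_pos_eq (Rabs t + 1)) by (pose proof (Rabs_pos t); lra). exact Hz. }
  destruct (continuity_pt_picard N t (eps / 3) ltac:(lra)) as [d [Hd Hc]].
  exists (Rmin d 1). split; [apply Rmin_pos; lra|].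
  intros y [Hne Hy]. simpl in *. unfold R_dist in *.
  pose proof (Rmin_l d 1). pose proof (Rmin_r d 1).
  assert (Hyd : Rabs (y - t) < d) by lra. specialize (Hc y (conj Hne Hyd)).
  pose proof (Happrox y ltac:(pose proof (Rabs_triang_inv y t); lra)) as Hy'.
  pose proof (Happrox t ltac:(lra)) as Ht'.
  apply Rabs_lt_between in Hc, Hy', Ht'. apply Rabs_def1; lra.
Qed.

Lemma jet_U_fixpoint t : jet_U t = picard_map jet_U t.
Proof.
  apply Rminus_diag_uniq, (geometric_bound_eq0 _ (picard_bound t * (1 + Rabs t))). intro n.
  assert (Hn := jet_U_picard (S n) t).
  assert (Hmap : Rabs (picard_map (picard n) t - picard_map jet_U t) <=
                 Rabs t * (picard_bound t * (/ 2) ^ n)).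
  { rewrite picard_map_sub by auto using continuity_pt_picard, continuity_pt_jet_U.
    rewrite <- (Rminus_0_r (Rabs t)) at 2.
    apply abs_RInt_le_const; [apply Rabs_pos| |].
    - apply ex_RInt_continuity_pt. intro u. apply continuity_pt_minus;
        apply (continuity_pt_comp _ clip);
        auto using continuity_pt_picard, continuity_pt_jet_U, continuity_pt_clip.
    - intros u Hu. eapply Rle_trans; [apply clip_lipschitz|].
      rewrite Rabs_minus_sym. eapply Rle_trans; [apply jet_U_picard|].
      apply Rmult_le_compat_r; [left; apply pow_lt; lra|].
      apply picard_bound_le. rewrite (Rabs_pos_eq u); lra. }
  change (picard (S n) t) with (picard_map (picard n) t) in Hn.
  pose proof (pow_lt (/ 2) n ltac:(lra)). pose proof (Rabs_pos t). pose proof (picard_bound_pos t).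
  apply Rabs_le_between in Hn, Hmap. simpl in Hn. apply Rabs_le. nra.
Qed.

Lemma continuity_pt_jet_U_integrand u : continuity_pt (fun u => rad A s u + clip (jet_U u)) u.
Proof.
  apply continuity_pt_plus; [apply continuity_pt_rad|].
  apply (continuity_pt_comp jet_U clip); [apply continuity_pt_jet_U | apply continuity_pt_clip].
Qed.

Lemma jet_U_ge_1 t : 1 <= jet_U t.
Proof.
  rewrite jet_U_fixpoint. unfold picard_map.
  enough (0 <= RInt (fun u => rad A s u + clip (jet_U u)) 0 (Rabs t)) by lra.
  apply RInt_ge_0; [apply Rabs_pos | apply ex_RInt_continuity_pt, continuity_pt_jet_U_integrand|].
  intros u _. assert (0 <= rad A s u) by apply sqrt_pos. pose proof (clip_bounds (jet_U u)). lra.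
Qed.

Lemma jet_U_0 : jet_U 0 = 1.
Proof. rewrite jet_U_fixpoint. unfold picard_map. rewrite Rabs_R0, RInt_point. cbn. ring. Qed.

Lemma is_derive_jet_U t : 0 < t -> is_derive jet_U t (rad A s t + / jet_U t).
Proof.
  intro Ht.
  apply (is_derive_ext_loc (fun y => 1 + RInt (fun u => rad A s u + clip (jet_U u)) 0 y)).
  - exists (mkposreal t Ht). intros y Hy. change (Rabs (y - t) < t) in Hy.
    apply Rabs_lt_between in Hy. rewrite (jet_U_fixpoint y). unfold picard_map.
    now rewrite (Rabs_pos_eq y) by lra.
  - rewrite <- (clip_inv (jet_U t)) by apply jet_U_ge_1.
    replace (rad A s t + clip (jet_U t)) with (0 + (rad A s t + clip (jet_U t))) by ring.
    apply (is_derive_plus (fun _ => 1));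
      [exact (is_derive_const (K := R_AbsRing) (V := R_NormedModule) 1 t)|].
    apply (is_derive_RInt_0 (fun u => rad A s u + clip (jet_U u))).
    apply continuity_pt_jet_U_integrand.
Qed.

Lemma jet_U_lt a b : 0 <= a < b -> jet_U a < jet_U b.
Proof.
  intro Hab. apply (derive_pos_lt _ (fun t => rad A s t + / jet_U t)); [lra| | |].
  - intros x Hx. apply is_derive_jet_U. lra.
  - intros x _. apply continuity_pt_jet_U.
  - intros x _. assert (0 <= rad A s x) by apply sqrt_pos.
    pose proof (jet_U_ge_1 x). assert (0 < / jet_U x) by (apply Rinv_0_lt_compat; lra). lra.
Qed.

Lemma jet_U_le a b : 0 <= a <= b -> jet_U a <= jet_U b.
Proof. intro Hab. destruct (Req_dec a b) as [->|]; [lra|]. left. apply jet_U_lt. lra. Qed.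

Lemma jet_U_ge_quadratic t : 0 <= t -> 1 + (A * t ^ 2 / 2 + Rabs s * t) / 2 <= jet_U t.
Proof.
  intro Ht.
  enough (Hinc : (A * t ^ 2 / 2 + Rabs s * t) / 2 - (A * 0 ^ 2 / 2 + Rabs s * 0) / 2
                 <= jet_U t - jet_U 0) by (rewrite jet_U_0 in Hinc; simpl in *; lra).
  apply (derive_le_increment_le (fun t => (A * t ^ 2 / 2 + Rabs s * t) / 2) jet_U
           (fun t => (A * t + Rabs s) / 2) (fun t => rad A s t + / jet_U t)); [exact Ht| | | | |].
  - intros x Hx. auto_derive; auto. field.
  - intros x Hx. apply is_derive_jet_U. lra.
  - intros. reg.
  - intros. apply continuity_pt_jet_U.
  - intros x Hx. destruct (rad_ge A s x) as [H1 H2]. pose proof (Rle_abs (A * x)).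
    pose proof (jet_U_ge_1 x). assert (0 < / jet_U x) by (apply Rinv_0_lt_compat; lra). lra.
Qed.

Definition jet_v (t : R) : R := / jet_U t.

Lemma jet_v_bounds t : 0 < jet_v t <= 1.
Proof.
  unfold jet_v. pose proof (jet_U_ge_1 t). split; [apply Rinv_0_lt_compat; lra|].
  rewrite <- Rinv_1. apply Rinv_le_contravar; lra.
Qed.

Lemma jet_v_0 : jet_v 0 = 1.
Proof. unfold jet_v. rewrite jet_U_0. apply Rinv_1. Qed.

Lemma continuity_pt_jet_v t : continuity_pt jet_v t.
Proof.
  apply (continuity_pt_inv jet_U); [apply continuity_pt_jet_U|].
  pose proof (jet_U_ge_1 t). lra.
Qed.

Lemma is_derive_jet_v t : 0 < t -> is_derive jet_v t (jet_rhs A (s ^ 2) t (jet_v t)).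
Proof.
  intro Ht. pose proof (jet_U_ge_1 t).
  apply (is_derive_ext (fun t => / jet_U t)); [reflexivity|].
  replace (jet_rhs A (s ^ 2) t (jet_v t)) with (- (rad A s t + / jet_U t) / jet_U t ^ 2).
  - apply is_derive_inv; [apply is_derive_jet_U; lra | lra].
  - unfold jet_rhs, jet_v. fold (rad A s t). field. lra.
Qed.

Lemma jet_v_ode_sol_global : ode_sol_global A (s ^ 2) jet_v.
Proof.
  split.
  - intros t Ht. now apply is_derive_jet_v.
  - apply continuity_pt_at_right, continuity_pt_jet_v.
Qed.

End Picard.

(** * Uniqueness, and the exit time *)

Lemma is_derive_sqr_sub (f g : R -> R) x df dg :
  is_derive f x df -> is_derive g x dg ->
  is_derive (fun y => (f y - g y) ^ 2) x (2 * (f x - g x) * (df - dg)).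
Proof.
  intros Hf Hg. replace (2 * (f x - g x) * (df - dg)) with (INR 2 * (df - dg) * (f x - g x) ^ pred 2)
    by (simpl; ring).
  apply (is_derive_pow (fun y => f y - g y)), (is_derive_minus f g); assumption.
Qed.

Lemma jet_rhs_one_sided_lipschitz A w t x y M : Rabs x <= M -> 0 < y <= 1 ->
  (x - y) * (jet_rhs A w t x - jet_rhs A w t y) <=
  (M + 1) * sqrt (A ^ 2 * t ^ 2 + w) * (x - y) ^ 2.
Proof.
  intros Hx Hy. unfold jet_rhs. set (r := sqrt (A ^ 2 * t ^ 2 + w)).
  assert (Hr : 0 <= r) by apply sqrt_pos.
  replace ((x - y) * (- x ^ 2 * (r + x) - - y ^ 2 * (r + y))) with
    (- (x - y) ^ 2 * ((x + y) * r + (x * x + x * y + y * y))) by ring.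
  assert (0 <= x * x + x * y + y * y) by nra.
  apply Rabs_le_between in Hx.
  assert (- (x + y) * r <= (M + 1) * r) by (apply Rmult_le_compat_r; lra).
  pose proof (pow2_ge_0 (x - y)). nra.
Qed.

Lemma ode_sol_clamp A w T v : 0 < T -> ode_sol A w T v ->
  (forall x, continuity_pt (fun t => v (clamp 0 T t)) x) /\
  (forall t, 0 < t < T -> is_derive (fun t => v (clamp 0 T t)) t (jet_rhs A w t (v t))).
Proof.
  intros HT [Hd [Hr Hl]]. split.
  - intro x. apply continuity_pt_clamp; auto.
    intros y Hy. eapply is_derive_continuity_pt, Hd, Hy.
  - intros t Ht. apply (is_derive_ext_loc v); [|now apply Hd].
    exists (mkposreal (Rmin t (T - t)) ltac:(apply Rmin_pos; lra)).
    intros y Hy. change (Rabs (y - t) < Rmin t (T - t)) in Hy. apply Rabs_lt_between in Hy.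
    pose proof (Rmin_l t (T - t)). pose proof (Rmin_r t (T - t)).
    now rewrite clamp_id by lra.
Qed.

(* Energy estimate: [(v - jet_v)^2] satisfies a linear differential inequality and
   vanishes at [0]. *)
Lemma ode_sol_unique A s T v : 0 < T -> ode_sol A (s ^ 2) T v -> v 0 = 1 ->
  forall t, 0 <= t <= T -> v t = jet_v A s t.
Proof.
  intros HT Hsol H0 t Ht.
  destruct (ode_sol_clamp A (s ^ 2) T v HT Hsol) as [Hc Hd].
  set (vt := fun t => v (clamp 0 T t)) in *.
  assert (Hvt : forall x, 0 <= x <= T -> vt x = v x) by (intros; unfold vt; now rewrite clamp_id).
  destruct (continuity_pt_bounded vt 0 T) as [M HM]; [lra | exact Hc|].
  assert (HM0 : 0 <= M) by (pose proof (Rabs_pos (vt 0)); pose proof (HM 0); lra).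
  assert (Hg := gronwall (fun x => (vt x - jet_v A s x) ^ 2)
    (fun x => 2 * (vt x - jet_v A s x) *
              (jet_rhs A (s ^ 2) x (vt x) - jet_rhs A (s ^ 2) x (jet_v A s x)))
    (2 * (M + 1) * rad A s T) t (proj1 Ht)).
  assert (Hf : (vt t - jet_v A s t) ^ 2 <= 0).
  { replace 0 with ((vt 0 - jet_v A s 0) ^ 2 * exp (2 * (M + 1) * rad A s T * t)).
    - apply Hg.
      + intros x Hx. apply is_derive_sqr_sub; [|apply is_derive_jet_v; lra].
        rewrite Hvt by lra. apply Hd. lra.
      + intros x _. apply (continuity_pt_comp (fun x => vt x - jet_v A s x) (fun z => z ^ 2));
          [apply continuity_pt_minus; auto using continuity_pt_jet_v | reg].
      + intros x Hx. pose proof (jet_rhs_one_sided_lipschitz A (s ^ 2) x (vt x) (jet_v A s x) M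
                                   (HM x ltac:(lra)) (jet_v_bounds A s x)).
        assert (sqrt (A ^ 2 * x ^ 2 + s ^ 2) <= rad A s T) by (apply rad_le_compat; nra).
        pose proof (pow2_ge_0 (vt x - jet_v A s x)).
        assert ((M + 1) * sqrt (A ^ 2 * x ^ 2 + s ^ 2) * (vt x - jet_v A s x) ^ 2 <=
                (M + 1) * rad A s T * (vt x - jet_v A s x) ^ 2).
        { apply Rmult_le_compat_r; [lra|]. apply Rmult_le_compat_l; lra. }
        lra.
    - rewrite Hvt, H0, jet_v_0 by lra. simpl. ring. }
  rewrite <- Hvt by lra. pose proof (pow2_ge_0 (vt t - jet_v A s t)). nra.
Qed.

Lemma ode_sol_global_ode_sol A w T v : 0 < T -> ode_sol_global A w v -> ode_sol A w T v.
Proof.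
  intros HT [Hd Hr]. split; [|split]; auto.
  - intros t Ht. apply Hd. lra.
  - apply continuity_pt_at_left. eapply is_derive_continuity_pt, Hd, HT.
Qed.

Lemma vsol_eq A w t : 0 <= w -> 0 <= t -> vsol A w t = jet_v A (sqrt w) t.
Proof.
  intros Hw Ht. rewrite <- (pow2_sqrt w) at 1 by exact Hw. set (s := sqrt w).
  assert (Hs : ode_sol_global A (s ^ 2) (vsol A (s ^ 2)) /\ vsol A (s ^ 2) 0 = 1).
  { unfold vsol. apply epsilon_spec. exists (jet_v A s).
    split; [apply jet_v_ode_sol_global | apply jet_v_0]. }
  destruct Hs as [Hg H0]. destruct (Req_dec t 0) as [->|Ht0]; [now rewrite H0, jet_v_0|].
  apply (ode_sol_unique A s t); auto; [lra | apply ode_sol_global_ode_sol; auto; lra | lra].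
Qed.

Section ExitTime.

Variables A s vn : R.
Hypothesis HA : 0 < A.
Hypothesis Hvn : 0 < vn < 1.

Lemma jet_tend_exists : exists T, 0 < T /\ jet_U A s T = / vn.
Proof.
  assert (Hiv : 1 < / vn) by (rewrite <- Rinv_1; apply Rinv_lt_contravar; lra).
  set (T0 := 1 + 4 / (A * vn)).
  assert (H4 : 0 < 4 / (A * vn)) by (apply Rdiv_lt_0_compat; nra).
  assert (HT0 : / vn < jet_U A s T0).
  { eapply Rlt_le_trans; [|apply jet_U_ge_quadratic; unfold T0; lra].
    assert (E : A * (4 / (A * vn)) = 4 * / vn) by (field; lra).
    pose proof (Rabs_pos s). unfold T0 in *. simpl. nra. }
  destruct (IVT (fun t => jet_U A s t - / vn) 0 T0) as [z [Hz1 Hz2]].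
  - intro x. apply continuity_pt_minus; [apply continuity_pt_jet_U | reg].
  - unfold T0. lra.
  - simpl. rewrite jet_U_0. lra.
  - simpl. lra.
  - exists z. simpl in Hz2. split; [|lra].
    destruct (Req_dec z 0) as [->|]; [rewrite jet_U_0 in Hz2|]; lra.
Qed.

Definition jet_tend : R := epsilon (inhabits 0) (fun T => 0 < T /\ jet_U A s T = / vn).

Lemma jet_tend_spec : 0 < jet_tend /\ jet_U A s jet_tend = / vn.
Proof. unfold jet_tend. apply epsilon_spec, jet_tend_exists. Qed.

Lemma jet_tend_unique T : 0 <= T -> jet_U A s T = / vn -> T = jet_tend.
Proof.
  intros HT HU. destruct jet_tend_spec as [H1 H2].
  destruct (Rtotal_order T jet_tend) as [Hlt|[Heq|Hgt]]; auto.
  - pose proof (jet_U_lt A s T jet_tend ltac:(lra)). lra.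
  - pose proof (jet_U_lt A s jet_tend T ltac:(lra)). lra.
Qed.

Lemma jet_tend_between a b : 0 <= a <= b ->
  jet_U A s a < / vn < jet_U A s b -> a < jet_tend < b.
Proof.
  intros Ha [Hla Hlb]. destruct jet_tend_spec as [HT HU].
  split; apply Rnot_le_lt; intro Hle.
  - pose proof (jet_U_le A s jet_tend a ltac:(lra)). lra.
  - pose proof (jet_U_le A s b jet_tend ltac:(lra)). lra.
Qed.

End ExitTime.

Lemma t_end_eq A w vn : 0 < A -> 0 <= w -> 0 < vn < 1 -> t_end A w vn = jet_tend A (sqrt w) vn.
Proof.
  intros HA Hw Hvn.
  assert (Hs : 0 < t_end A w vn /\ vsol A w (t_end A w vn) = vn).
  { unfold t_end. apply epsilon_spec. exists (jet_tend A (sqrt w) vn).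
    destruct (jet_tend_spec A (sqrt w) vn HA Hvn) as [H1 H2]. split; auto.
    rewrite vsol_eq by lra. unfold jet_v. rewrite H2. apply Rinv_inv. }
  destruct Hs as [H1 H2]. rewrite vsol_eq in H2 by lra.
  apply jet_tend_unique; [exact HA | exact Hvn | lra |].
  unfold jet_v in H2. apply (f_equal Rinv) in H2. now rewrite Rinv_inv in H2.
Qed.

(** * Dependence on [s = sqrt w] *)

(* The integrating factor [exp (\int_0^t 1 / (U1 U2))] absorbs the [1 / U] terms. *)
Lemma jet_U_lt_s A s1 s2 t : s1 ^ 2 < s2 ^ 2 -> 0 < t -> jet_U A s1 t < jet_U A s2 t.
Proof.
  intros Hs Ht.
  set (h := fun u => / (jet_U A s1 u * jet_U A s2 u)).
  assert (Hh : forall x, continuity_pt h x).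
  { intro x. apply (continuity_pt_inv (fun u => jet_U A s1 u * jet_U A s2 u));
      [apply continuity_pt_mult; apply continuity_pt_jet_U|].
    pose proof (jet_U_ge_1 A s1 x). pose proof (jet_U_ge_1 A s2 x). nra. }
  set (H := fun t => RInt h 0 t).
  assert (Hf : (jet_U A s2 0 - jet_U A s1 0) * exp (H 0) <
               (jet_U A s2 t - jet_U A s1 t) * exp (H t)).
  { apply (derive_pos_lt (fun t => (jet_U A s2 t - jet_U A s1 t) * exp (H t))
             (fun t => (rad A s2 t - rad A s1 t) * exp (H t))); [exact Ht| | |].
    - intros x Hx. pose proof (jet_U_ge_1 A s1 x). pose proof (jet_U_ge_1 A s2 x).
      replace ((rad A s2 x - rad A s1 x) * exp (H x)) with
        (((rad A s2 x + / jet_U A s2 x) - (rad A s1 x + / jet_U A s1 x)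
          + h x * (jet_U A s2 x - jet_U A s1 x)) * exp (H x)) by (unfold h; field; lra).
      apply (is_derive_mult_exp (fun t => jet_U A s2 t - jet_U A s1 t) H);
        [|apply is_derive_RInt_0, Hh].
      apply (is_derive_minus (jet_U A s2) (jet_U A s1)); apply is_derive_jet_U; lra.
    - intros x _. apply continuity_pt_mult;
        [apply continuity_pt_minus; apply continuity_pt_jet_U|].
      assert (continuity_pt H x) by (apply continuity_pt_RInt_0, Hh). reg.
    - intros x _. apply Rmult_lt_0_compat; [|apply exp_pos].
      pose proof (rad_lt_compat A s1 s2 x Hs). lra. }
  rewrite !jet_U_0, Rminus_diag, Rmult_0_l in Hf. pose proof (exp_pos (H t)). nra.
Qed.

Lemma jet_U_lipschitz_s A s s' t : 0 <= t ->
  Rabs (jet_U A s t - jet_U A s' t) <= Rabs (s - s') * exp t.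
Proof.
  intro Ht. set (d := Rabs (s - s')). set (D := fun x => jet_U A s x - jet_U A s' x).
  assert (Hf : D t ^ 2 + d ^ 2 <= (D 0 ^ 2 + d ^ 2) * exp (1 * t)).
  { apply (gronwall (fun x => D x ^ 2 + d ^ 2)
      (fun x => 2 * D x * ((rad A s x + / jet_U A s x) - (rad A s' x + / jet_U A s' x)) + 0));
      [exact Ht| | |].
    - intros x Hx. apply (is_derive_plus (fun x => D x ^ 2) (fun _ => d ^ 2)).
      + apply is_derive_sqr_sub; apply is_derive_jet_U; lra.
      + exact (is_derive_const (K := R_AbsRing) (V := R_NormedModule) _ x).
    - intros x _. apply continuity_pt_plus; [|reg].
      apply (continuity_pt_comp D (fun z => z ^ 2)); [|reg].
      apply continuity_pt_minus; apply continuity_pt_jet_U.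
    - intros x _. pose proof (jet_U_ge_1 A s x). pose proof (jet_U_ge_1 A s' x).
      assert (Ha : Rabs (rad A s x - rad A s' x) <= d) by apply rad_lipschitz.
      assert (Hb : D x * (/ jet_U A s x - / jet_U A s' x) <= 0).
      { replace (D x * (/ jet_U A s x - / jet_U A s' x))
          with (- (D x ^ 2 / (jet_U A s x * jet_U A s' x))) by (unfold D; field; lra).
        assert (0 <= D x ^ 2 / (jet_U A s x * jet_U A s' x)).
        { apply Rdiv_le_0_compat; [apply pow2_ge_0 | nra]. }
        lra. }
      assert (Hc : 2 * D x * (rad A s x - rad A s' x) <= D x ^ 2 + d ^ 2).
      { pose proof (Rle_abs (D x * (rad A s x - rad A s' x))). rewrite Rabs_mult in *.
        pose proof (Rabs_pos (D x)). pose proof (pow2_abs (D x)).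
        assert (Rabs (D x) * Rabs (rad A s x - rad A s' x) <= Rabs (D x) * d)
          by (apply Rmult_le_compat_l; lra).
        pose proof (pow2_ge_0 (Rabs (D x) - d)). nra. }
      nra. }
  assert (HD0 : D 0 = 0) by (unfold D; rewrite !jet_U_0; ring).
  rewrite HD0, Rmult_1_l in Hf. simpl in Hf.
  assert (Hexp : exp t <= exp t * exp t) by (pose proof (exp_ineq1_le t); nra).
  assert (Hd : 0 <= d * exp t) by (apply Rmult_le_pos; [apply Rabs_pos | left; apply exp_pos]).
  rewrite <- (Rabs_pos_eq (d * exp t)) by exact Hd.
  apply Rsqr_le_abs_0. unfold Rsqr. change (D t * D t <= d * exp t * (d * exp t)).
  assert (d * d * exp t <= d * d * (exp t * exp t)) by (apply Rmult_le_compat_l; nra).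
  nra.
Qed.

Lemma continuity_pt_jet_tend A vn s0 : 0 < A -> 0 < vn < 1 ->
  continuity_pt (fun s => jet_tend A s vn) s0.
Proof.
  intros HA Hvn eps Heps.
  destruct (jet_tend_spec A s0 vn HA Hvn) as [HT HU]. set (T := jet_tend A s0 vn) in *.
  set (e := Rmin eps T / 2).
  assert (He : 0 < e < eps /\ e < T).
  { unfold e. pose proof (Rmin_pos eps T Heps HT). pose proof (Rmin_l eps T).
    pose proof (Rmin_r eps T). lra. }
  set (a := T - e). set (b := T + e).
  assert (Ha : jet_U A s0 a < / vn) by (rewrite <- HU; apply jet_U_lt; unfold a; lra).
  assert (Hb : / vn < jet_U A s0 b) by (rewrite <- HU; apply jet_U_lt; unfold b; lra).
  set (g := Rmin (/ vn - jet_U A s0 a) (jet_U A s0 b - / vn)).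
  assert (Hga : g <= / vn - jet_U A s0 a) by apply Rmin_l.
  assert (Hgb : g <= jet_U A s0 b - / vn) by apply Rmin_r.
  assert (Hg : 0 < g) by (apply Rmin_pos; lra).
  exists (g / exp b). split; [apply Rdiv_lt_0_compat; [exact Hg | apply exp_pos]|].
  intros s [_ Hs]. simpl in *. unfold R_dist in *.
  assert (Hclose : forall x, 0 <= x <= b -> Rabs (jet_U A s x - jet_U A s0 x) < g).
  { intros x Hx. eapply Rle_lt_trans; [apply jet_U_lipschitz_s; lra|].
    assert (exp x <= exp b) by (apply exp_le_compat; lra).
    apply Rmult_lt_compat_r with (r := exp b) in Hs; [|apply exp_pos].
    replace (g / exp b * exp b) with g in Hs by (pose proof (exp_pos b); field; lra).
    pose proof (Rabs_pos (s - s0)). nra. }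
  pose proof (Hclose a ltac:(unfold a, b; lra)) as Hca.
  pose proof (Hclose b ltac:(unfold b; lra)) as Hcb.
  apply Rabs_lt_between in Hca, Hcb.
  assert (Hab : 0 <= a <= b) by (unfold a, b; lra).
  assert (Hbetween : jet_U A s a < / vn < jet_U A s b) by lra.
  pose proof (jet_tend_between A s vn HA Hvn a b Hab Hbetween).
  apply Rabs_lt_between. unfold a, b in *. lra.
Qed.

Lemma jet_v_lipschitz_s A s s' t : 0 <= t ->
  Rabs (jet_v A s t - jet_v A s' t) <= Rabs (s - s') * exp t.
Proof.
  intro Ht. unfold jet_v. rewrite <- !clip_inv by apply jet_U_ge_1.
  eapply Rle_trans; [apply clip_lipschitz | now apply jet_U_lipschitz_s].
Qed.

(** * The integral [I] *)

(* At [s = 0] the quotient is [1] for [t > 0] but [0 / 0 = 0] at [t = 0]; the separate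
   case keeps [sin_theta] continuous. *)
Definition sin_theta (A s t : R) : R := if Req_EM_T s 0 then 1 else A * t / rad A s t.

Definition jet_I (A s vn : R) : R :=
  RInt (fun t => jet_v A s t * sin_theta A s t) 0 (jet_tend A s vn).

Lemma rad_0 A s : rad A s 0 = Rabs s.
Proof. unfold rad. rewrite <- (pow2_abs s). rewrite <- sqrt_pow2 by apply Rabs_pos. f_equal. ring. Qed.

Lemma continuity_pt_sin_theta A s t : continuity_pt (sin_theta A s) t.
Proof.
  unfold sin_theta. destruct (Req_EM_T s 0) as [_|Hs].
  - apply continuity_pt_const. now intros ? ?.
  - apply (continuity_pt_div (fun t => A * t) (rad A s)); [reg | apply continuity_pt_rad |].
    pose proof (rad_pos A s t Hs). lra.
Qed.

Lemma sin_theta_bounds A s t : 0 <= A -> 0 <= t -> 0 <= sin_theta A s t <= 1.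
Proof.
  intros HA Ht. unfold sin_theta. destruct (Req_EM_T s 0) as [_|Hs]; [lra|].
  pose proof (rad_pos A s t Hs). pose proof (proj1 (rad_ge A s t)). pose proof (Rle_abs (A * t)).
  split; [apply Rdiv_le_0_compat; nra|].
  apply Rmult_le_reg_r with (rad A s t); [lra|]. unfold Rdiv. rewrite Rmult_assoc, Rinv_l; lra.
Qed.

Lemma sin_theta_pos A s t : 0 < A -> 0 < t -> 0 < sin_theta A s t.
Proof.
  intros HA Ht. unfold sin_theta. destruct (Req_EM_T s 0) as [_|Hs]; [lra|].
  apply Rdiv_lt_0_compat; [nra | now apply rad_pos].
Qed.

Lemma sin_theta_antitone A s1 s2 t : 0 <= A -> s1 ^ 2 <= s2 ^ 2 -> 0 <= t ->
  sin_theta A s2 t <= sin_theta A s1 t.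
Proof.
  intros HA Hs Ht. pose proof (sin_theta_bounds A s2 t HA Ht).
  unfold sin_theta in *. destruct (Req_EM_T s1 0) as [_|Hs1]; [lra|].
  destruct (Req_EM_T s2 0) as [->|Hs2].
  - exfalso. pose proof (Rabs_pos_lt s1 Hs1). rewrite <- (pow2_abs s1) in Hs. simpl in Hs. nra.
  - unfold Rdiv. apply Rmult_le_compat_l; [nra|].
    apply Rinv_le_contravar; [now apply rad_pos | apply rad_le_compat; lra].
Qed.

Lemma RInt_sin_theta A s T : 0 < A -> 0 <= T -> RInt (sin_theta A s) 0 T = (rad A s T - Rabs s) / A.
Proof.
  intros HA HT. rewrite <- (rad_0 A s). unfold sin_theta. destruct (Req_EM_T s 0) as [->|Hs].
  - rewrite RInt_const. unfold rad. cbn. replace (A * (A * 1) * (T * (T * 1)) + 0 * (0 * 1))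
      with ((A * T) ^ 2) by ring. replace (A * (A * 1) * (0 * (0 * 1)) + 0 * (0 * 1))
      with (0 ^ 2) by ring. rewrite !sqrt_pow2 by nra. field. lra.
  - apply is_RInt_unique. replace ((rad A s T - rad A s 0) / A)
      with (minus (rad A s T / A) (rad A s 0 / A)) by (cbn; unfold minus, plus, opp; cbn; field; lra).
    apply (is_RInt_derive (fun t => rad A s t / A)).
    + intros x _. pose proof (rad_pos A s x Hs). unfold rad in *.
      assert (0 < s ^ 2) by (rewrite <- (pow2_abs s); apply pow_lt, Rabs_pos_lt, Hs).
      assert (0 <= A ^ 2 * x ^ 2) by (rewrite <- Rpow_mult_distr; apply pow2_ge_0).
      auto_derive; [lra|].
      replace (A * (A * 1) * (x * (x * 1)) + s * (s * 1)) with (A ^ 2 * x ^ 2 + s ^ 2) by ring.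
      field. split; lra.
    + intros x _. apply continuity_pt_filterlim.
      apply (continuity_pt_div (fun t => A * t) (rad A s)); [reg | apply continuity_pt_rad |].
      pose proof (rad_pos A s x Hs). lra.
Qed.

Section WeightedSinTheta.

Variables (A T : R) (V : R -> R).
Hypothesis HA : 0 < A.
Hypothesis HT : 0 <= T.
Hypothesis HVc : forall x, continuity_pt V x.
Hypothesis HVb : forall t, 0 <= t -> 0 < V t <= 1.

Lemma ex_RInt_weighted_sin_theta s : ex_RInt (fun t => V t * sin_theta A s t) 0 T.
Proof.
  apply ex_RInt_continuity_pt. intro x. apply continuity_pt_mult; [apply HVc|].
  apply continuity_pt_sin_theta.
Qed.

Lemma RInt_weighted_sin_theta_antitone s1 s2 : s1 ^ 2 <= s2 ^ 2 ->
  0 <= RInt (fun t => V t * sin_theta A s1 t) 0 T - RInt (fun t => V t * sin_theta A s2 t) 0 T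
    <= (Rabs s2 - Rabs s1) / A.
Proof.
  intro Hs. rewrite <- RInt_minus_R by apply ex_RInt_weighted_sin_theta.
  assert (Hpt : forall x, 0 < x < T ->
    0 <= V x * sin_theta A s1 x - V x * sin_theta A s2 x <= sin_theta A s1 x - sin_theta A s2 x).
  { intros x Hx. pose proof (HVb x ltac:(lra)).
    pose proof (sin_theta_antitone A s1 s2 x ltac:(lra) Hs ltac:(lra)). nra. }
  assert (Hex : ex_RInt (fun t => V t * sin_theta A s1 t - V t * sin_theta A s2 t) 0 T).
  { apply ex_RInt_continuity_pt. intro x. apply continuity_pt_minus;
      apply continuity_pt_mult; auto using continuity_pt_sin_theta. }
  split.
  - apply RInt_ge_0; [exact HT | exact Hex|]. intros x Hx. apply Hpt, Hx.
  - eapply Rle_trans; [apply (RInt_le _ (fun t => sin_theta A s1 t - sin_theta A s2 t));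
      [exact HT | exact Hex | | intros x Hx; apply Hpt, Hx]|].
    + apply ex_RInt_continuity_pt. intro x. apply continuity_pt_minus; apply continuity_pt_sin_theta.
    + rewrite RInt_minus_R by (apply ex_RInt_continuity_pt, continuity_pt_sin_theta).
      rewrite !RInt_sin_theta by assumption.
      assert (rad A s1 T <= rad A s2 T) by (apply rad_le_compat; lra).
      unfold Rdiv. assert (0 < / A) by (apply Rinv_0_lt_compat, HA). nra.
Qed.

Lemma RInt_weighted_sin_theta_lipschitz s s' :
  Rabs (RInt (fun t => V t * sin_theta A s t) 0 T - RInt (fun t => V t * sin_theta A s' t) 0 T)
    <= Rabs (s - s') / A.
Proof.
  assert (Hd : Rabs (Rabs s - Rabs s') / A <= Rabs (s - s') / A).
  { unfold Rdiv. apply Rmult_le_compat_r; [left; apply Rinv_0_lt_compat, HA|].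
    apply Rabs_triang_inv2. }
  destruct (Rle_dec (s ^ 2) (s' ^ 2)) as [Hs|Hs].
  - pose proof (RInt_weighted_sin_theta_antitone s s' Hs).
    rewrite Rabs_pos_eq by lra. eapply Rle_trans; [|exact Hd].
    rewrite Rabs_minus_sym. eapply Rle_trans; [|apply Rmult_le_compat_r; [|apply Rle_abs]];
      [lra | left; apply Rinv_0_lt_compat, HA].
  - pose proof (RInt_weighted_sin_theta_antitone s' s ltac:(lra)).
    rewrite Rabs_minus_sym, Rabs_pos_eq by lra. eapply Rle_trans; [|exact Hd].
    eapply Rle_trans; [|apply Rmult_le_compat_r; [|apply Rle_abs]];
      [lra | left; apply Rinv_0_lt_compat, HA].
Qed.

End WeightedSinTheta.

Section JetIntegral.

Variables A vn : R.
Hypothesis HA : 0 < A.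
Hypothesis Hvn : 0 < vn < 1.

Lemma ex_RInt_jet_integrand s a b : ex_RInt (fun t => jet_v A s t * sin_theta A s t) a b.
Proof.
  apply ex_RInt_continuity_pt. intro x.
  apply continuity_pt_mult; [apply continuity_pt_jet_v | apply continuity_pt_sin_theta].
Qed.

Lemma abs_RInt_jet_integrand_le s a b : 0 <= a -> 0 <= b ->
  Rabs (RInt (fun t => jet_v A s t * sin_theta A s t) a b) <= Rabs (b - a).
Proof.
  intros Ha Hb. rewrite <- (Rmult_1_r (Rabs (b - a))).
  apply abs_RInt_le_const_swap; [apply ex_RInt_jet_integrand|]. intros x Hx.
  assert (Hx0 : 0 <= x) by (pose proof (Rmin_glb a b 0 Ha Hb); lra).
  pose proof (jet_v_bounds A s x). pose proof (sin_theta_bounds A s x (Rlt_le _ _ HA) Hx0).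
  rewrite Rabs_pos_eq; nra.
Qed.

Lemma abs_RInt_jet_v_sub_le s s0 T : 0 <= T ->
  Rabs (RInt (fun t => (jet_v A s t - jet_v A s0 t) * sin_theta A s t) 0 T)
    <= T * (Rabs (s - s0) * exp T).
Proof.
  intro HT. rewrite <- (Rabs_pos_eq T) at 2 by exact HT. rewrite <- (Rminus_0_r T) at 2.
  apply abs_RInt_le_const_swap.
  - apply ex_RInt_continuity_pt. intro x. apply continuity_pt_mult;
      [apply continuity_pt_minus; apply continuity_pt_jet_v | apply continuity_pt_sin_theta].
  - intros x Hx. rewrite Rmin_left, Rmax_right in Hx by lra. rewrite Rabs_mult.
    pose proof (sin_theta_bounds A s x ltac:(lra) ltac:(lra)).
    rewrite (Rabs_pos_eq (sin_theta A s x)) by lra.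
    pose proof (jet_v_lipschitz_s A s s0 x ltac:(lra)).
    assert (exp x <= exp T) by (apply exp_le_compat; lra).
    pose proof (Rabs_pos (s - s0)). pose proof (Rabs_pos (jet_v A s x - jet_v A s0 x)).
    assert (Rabs (s - s0) * exp x <= Rabs (s - s0) * exp T) by (apply Rmult_le_compat_l; lra).
    nra.
Qed.

Lemma jet_I_sub_bound s s0 :
  Rabs (jet_I A s vn - jet_I A s0 vn) <=
  Rabs (jet_tend A s vn - jet_tend A s0 vn) +
  Rabs (s - s0) * (jet_tend A s0 vn * exp (jet_tend A s0 vn) + / A).
Proof.
  destruct (jet_tend_spec A s0 vn HA Hvn) as [HT0 _].
  destruct (jet_tend_spec A s vn HA Hvn) as [HT _].
  set (T0 := jet_tend A s0 vn) in *. set (T := jet_tend A s vn) in *.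
  set (G := fun t => jet_v A s t * sin_theta A s t).
  set (G0 := fun t => jet_v A s0 t * sin_theta A s0 t).
  set (Hs := fun t => jet_v A s0 t * sin_theta A s t).
  set (W := fun t => (jet_v A s t - jet_v A s0 t) * sin_theta A s t).
  assert (Hsplit : jet_I A s vn - jet_I A s0 vn =
    RInt G T0 T + RInt W 0 T0 + (RInt Hs 0 T0 - RInt G0 0 T0)).
  { replace (RInt W 0 T0) with (RInt G 0 T0 - RInt Hs 0 T0).
    - unfold jet_I. fold T T0 G G0.
      rewrite <- (RInt_Chasles (V := R_CompleteNormedModule) G 0 T0 T)
        by apply ex_RInt_jet_integrand.
      cbn. ring.
    - rewrite <- RInt_minus_R by (try apply ex_RInt_jet_integrand;
        apply ex_RInt_weighted_sin_theta, continuity_pt_jet_v).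
      apply RInt_ext. intros. unfold G, Hs, W. cbn. ring. }
  assert (B1 := abs_RInt_jet_integrand_le s T0 T ltac:(lra) ltac:(lra)).
  assert (B2 := abs_RInt_jet_v_sub_le s s0 T0 ltac:(lra)).
  assert (B3 := RInt_weighted_sin_theta_lipschitz A T0 (jet_v A s0) HA ltac:(lra)
                  (continuity_pt_jet_v A s0) (fun t _ => jet_v_bounds A s0 t) s s0).
  rewrite Hsplit. eapply Rle_trans; [apply Rabs_triang|].
  eapply Rle_trans; [apply Rplus_le_compat_r, Rabs_triang|].
  unfold Rdiv in B3. fold Hs G0 in B3. fold G in B1. fold W in B2.
  assert (E : Rabs (s - s0) * (T0 * exp T0 + / A) =
              T0 * (Rabs (s - s0) * exp T0) + Rabs (s - s0) * / A) by ring.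
  lra.
Qed.

Lemma continuity_pt_jet_I s0 : continuity_pt (fun s => jet_I A s vn) s0.
Proof.
  intros eps Heps.
  set (C := jet_tend A s0 vn * exp (jet_tend A s0 vn) + / A + 1).
  assert (HC : 0 < C).
  { destruct (jet_tend_spec A s0 vn HA Hvn) as [HT _]. unfold C.
    pose proof (exp_pos (jet_tend A s0 vn)). assert (0 < / A) by (apply Rinv_0_lt_compat, HA).
    nra. }
  destruct (continuity_pt_jet_tend A vn s0 HA Hvn (eps / 2) ltac:(lra)) as [d [Hd Htend]].
  exists (Rmin d (eps / (2 * C))). split; [apply Rmin_pos; [lra | apply Rdiv_lt_0_compat; lra]|].
  intros s [Hne Hs]. simpl in *. unfold R_dist in *.
  pose proof (Rmin_l d (eps / (2 * C))). pose proof (Rmin_r d (eps / (2 * C))).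
  assert (Hsd : Rabs (s - s0) < d) by lra.
  specialize (Htend s (conj Hne Hsd)). simpl in Htend. unfold R_dist in Htend.
  assert (HsC : Rabs (s - s0) * C <= eps / 2).
  { apply Rle_trans with (eps / (2 * C) * C); [apply Rmult_le_compat_r; lra|].
    right. field. lra. }
  eapply Rle_lt_trans; [apply jet_I_sub_bound|].
  unfold C in HsC. pose proof (Rabs_pos (s - s0)). nra.
Qed.

Lemma jet_I_lt s1 s2 : s1 ^ 2 < s2 ^ 2 -> jet_I A s2 vn < jet_I A s1 vn.
Proof.
  intro Hs.
  destruct (jet_tend_spec A s1 vn HA Hvn) as [HT1 HU1].
  destruct (jet_tend_spec A s2 vn HA Hvn) as [HT2 HU2].
  set (T1 := jet_tend A s1 vn) in *. set (T2 := jet_tend A s2 vn) in *.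
  assert (HT : T2 < T1).
  { apply Rnot_le_lt. intro Hle.
    pose proof (jet_U_le A s2 T1 T2 ltac:(lra)). pose proof (jet_U_lt_s A s1 s2 T1 Hs HT1). lra. }
  unfold jet_I. fold T1 T2.
  rewrite <- (RInt_Chasles (V := R_CompleteNormedModule) _ 0 T2 T1)
    by apply ex_RInt_jet_integrand.
  assert (I1 : RInt (fun t => jet_v A s2 t * sin_theta A s2 t) 0 T2 <=
               RInt (fun t => jet_v A s1 t * sin_theta A s1 t) 0 T2).
  { apply RInt_le; [lra | apply ex_RInt_jet_integrand | apply ex_RInt_jet_integrand|].
    intros x Hx. pose proof (jet_U_lt_s A s1 s2 x Hs ltac:(lra)).
    pose proof (jet_U_ge_1 A s1 x).
    assert (jet_v A s2 x <= jet_v A s1 x) by (unfold jet_v; apply Rinv_le_contravar; lra).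
    pose proof (sin_theta_antitone A s1 s2 x ltac:(lra) ltac:(lra) ltac:(lra)).
    pose proof (sin_theta_bounds A s2 x ltac:(lra) ltac:(lra)). pose proof (jet_v_bounds A s2 x).
    apply Rmult_le_compat; lra. }
  assert (I2 : 0 < RInt (fun t => jet_v A s1 t * sin_theta A s1 t) T2 T1).
  { apply RInt_gt_0; [exact HT| |].
    - intros x Hx. apply Rmult_lt_0_compat; [apply jet_v_bounds | apply sin_theta_pos; lra].
    - intros x _. apply continuity_pt_filterlim, continuity_pt_mult;
        [apply continuity_pt_jet_v | apply continuity_pt_sin_theta]. }
  match goal with |- _ < plus ?a ?b => change (plus a b) with (a + b) end. lra.
Qed.

Lemma jet_I_small B : 0 < B -> exists s, 0 < s /\ jet_I A s vn < B.
Proof.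
  intro HB.
  assert (Hiv : 1 < / vn) by (rewrite <- Rinv_1; apply Rinv_lt_contravar; lra).
  assert (Hc : 0 < / vn - 1) by lra.
  set (c := / vn - 1) in *. set (s := 2 * c / B + 1).
  assert (Hs : 0 < s) by (unfold s; assert (0 < 2 * c / B) by (apply Rdiv_lt_0_compat; lra); lra).
  exists s. split; [exact Hs|].
  destruct (jet_tend_spec A s vn HA Hvn) as [HT HU]. set (T := jet_tend A s vn) in *.
  assert (HsT : s * T <= 2 * c).
  { pose proof (jet_U_ge_quadratic A s T ltac:(lra)). rewrite HU, Rabs_pos_eq in H by lra.
    assert (0 <= A * T ^ 2) by (apply Rmult_le_pos; [lra | apply pow2_ge_0]). unfold c. lra. }
  assert (HI := abs_RInt_jet_integrand_le s 0 T ltac:(lra) ltac:(lra)).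
  rewrite Rminus_0_r, (Rabs_pos_eq T) in HI by lra. change (Rabs (jet_I A s vn) <= T) in HI.
  assert (2 * c < B * s) by (unfold s; field_simplify; lra).
  pose proof (Rle_abs (jet_I A s vn)). nra.
Qed.

End JetIntegral.

Lemma I0_eq A vn : 0 < A -> 0 < vn < 1 -> I0 A vn = jet_I A 0 vn.
Proof.
  intros HA Hvn. unfold I0, jet_I.
  rewrite t_end_eq, sqrt_0 by lra.
  destruct (jet_tend_spec A 0 vn HA Hvn) as [HT _].
  apply RInt_ext. intros x Hx. rewrite Rmin_left, Rmax_right in Hx by lra.
  rewrite vsol_eq, sqrt_0 by lra. unfold sin_theta.
  destruct (Req_EM_T 0 0); [cbn; ring | congruence].
Qed.

(** * The boundary value problem *)

Lemma jet_I_inj A vn s1 s2 : 0 < A -> 0 < vn < 1 -> 0 <= s1 -> 0 <= s2 ->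
  jet_I A s1 vn = jet_I A s2 vn -> s1 = s2.
Proof.
  intros HA Hvn Hs1 Hs2 HI.
  destruct (Rtotal_order s1 s2) as [Hlt|[Heq|Hgt]]; auto.
  - pose proof (jet_I_lt A vn HA Hvn s1 s2 ltac:(nra)). lra.
  - pose proof (jet_I_lt A vn HA Hvn s2 s1 ltac:(nra)). lra.
Qed.

Lemma jet_I_root A vn B : 0 < A -> 0 < vn < 1 -> 0 < B -> jet_I A 0 vn > B ->
  exists s, 0 < s /\ jet_I A s vn = B.
Proof.
  intros HA Hvn HB HI0. destruct (jet_I_small A vn HA Hvn B HB) as (S & HS & HIS).
  assert (Hcont : forall a, 0 <= a <= S -> continuity_pt (fun s => B - jet_I A s vn) a).
  { intros a _. apply continuity_pt_minus; [reg | now apply continuity_pt_jet_I]. }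
  assert (H0 : B - jet_I A 0 vn < 0) by lra.
  assert (HSpos : 0 < B - jet_I A S vn) by lra.
  destruct (Ranalysis5.IVT_interv _ 0 S Hcont HS H0 HSpos) as (s & Hs & Hroot).
  cbv beta in Hroot. exists s. split; [|lra].
  destruct (Req_dec s 0) as [->|]; lra.
Qed.

Lemma bvp_integral_eq A s T v : 0 <= T -> (forall t, 0 <= t <= T -> v t = jet_v A s t) -> s <> 0 ->
  RInt (fun t => A * t * v t / sqrt (A ^ 2 * t ^ 2 + s ^ 2)) 0 T =
  RInt (fun t => jet_v A s t * sin_theta A s t) 0 T.
Proof.
  intros HT Hv Hs. apply RInt_ext. intros x Hx. rewrite Rmin_left, Rmax_right in Hx by lra.
  rewrite Hv by lra. unfold sin_theta. destruct (Req_EM_T s 0) as [|_]; [contradiction|].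
  unfold rad. cbn. unfold Rdiv. ring.
Qed.

Lemma bvp_sol_char A B vn w T v : 0 < A -> 0 < vn < 1 -> bvp_sol A B vn w T v ->
  0 < sqrt w /\ T = jet_tend A (sqrt w) vn /\
  (forall t, 0 <= t <= T -> v t = jet_v A (sqrt w) t) /\ jet_I A (sqrt w) vn = B.
Proof.
  intros HA Hvn [Hw [HT [Hode [H0 [HTv Hint]]]]].
  set (s := sqrt w). assert (Hs : 0 < s) by (apply sqrt_lt_R0; lra).
  assert (Hws : w = s ^ 2) by (unfold s; rewrite pow2_sqrt; lra).
  rewrite Hws in Hode, Hint.
  assert (Hv : forall t, 0 <= t <= T -> v t = jet_v A s t) by now apply ode_sol_unique.
  assert (HTe : T = jet_tend A s vn).
  { apply jet_tend_unique; [exact HA | exact Hvn | lra |].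
    rewrite <- HTv, Hv by lra. unfold jet_v. now rewrite Rinv_inv. }
  split; [exact Hs | split; [exact HTe | split; [exact Hv|]]].
  rewrite <- Hint, bvp_integral_eq by (auto; lra). unfold jet_I. now rewrite HTe.
Qed.

Lemma bvp_sol_of_jet_I A B vn s : 0 < A -> 0 < vn < 1 -> 0 < s -> jet_I A s vn = B ->
  bvp_sol A B vn (s ^ 2) (jet_tend A s vn) (jet_v A s).
Proof.
  intros HA Hvn Hs HI. destruct (jet_tend_spec A s vn HA Hvn) as [HT HU].
  split; [now apply pow_lt|]. split; [exact HT|]. split.
  { apply ode_sol_global_ode_sol; [exact HT | apply jet_v_ode_sol_global]. }
  split; [apply jet_v_0|]. split.
  - unfold jet_v. rewrite HU. apply Rinv_inv.
  - rewrite bvp_integral_eq by (auto; lra). exact HI.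
Qed.

Theorem theorem4p7 (A B vn : R) :
  0 < A -> 0 < B -> 0 < vn < 1 ->
  ((exists w T (v : R -> R), bvp_sol A B vn w T v) <-> I0 A vn > B) /\
  (forall w1 T1 (v1 : R -> R) w2 T2 (v2 : R -> R),
      bvp_sol A B vn w1 T1 v1 -> bvp_sol A B vn w2 T2 v2 ->
      w1 = w2 /\ T1 = T2 /\ (forall t, 0 <= t <= T1 -> v1 t = v2 t)).
Proof.
  intros HA HB Hvn. rewrite (I0_eq A vn HA Hvn).
  split; [split|].
  - intros (w & T & v & Hsol).
    destruct (bvp_sol_char A B vn w T v HA Hvn Hsol) as (Hs & _ & _ & HI).
    rewrite <- HI. apply jet_I_lt; auto. simpl. nra.
  - intro HI0. destruct (jet_I_root A vn B HA Hvn HB HI0) as (s & Hs & HI).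
    exists (s ^ 2), (jet_tend A s vn), (jet_v A s). now apply bvp_sol_of_jet_I.
  - intros w1 T1 v1 w2 T2 v2 H1 H2.
    destruct (bvp_sol_char A B vn w1 T1 v1 HA Hvn H1) as (Hs1 & HT1 & Hv1 & HI1).
    destruct (bvp_sol_char A B vn w2 T2 v2 HA Hvn H2) as (Hs2 & HT2 & Hv2 & HI2).
    assert (Hs : sqrt w1 = sqrt w2) by (apply (jet_I_inj A vn); lra).
    assert (HT : T1 = T2) by now rewrite HT1, HT2, Hs.
    split; [apply sqrt_inj; [left; apply (proj1 H1) | left; apply (proj1 H2) | exact Hs]|].
    split; [exact HT|].
    intros t Ht. rewrite Hv1, Hv2, Hs by lra. reflexivity.
Qed.
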